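(* Let $(X,d)$ be a compact metric space, $\Lambda$ a finite nonempty set, and $\mathcal{F}=\{X; f_{\lambda}\mid \lambda\in\Lambda\}$ a parameterized iterated function system of continuous maps $f_\lambda:X\to X$. If $\mathcal{F}$ is uniformly contracting, then $\mathcal{F}$ has the asymptotic average shadowing property.
   Context: For $\sigma=\{\lambda_0,\lambda_1,\dots\}\in\Lambda^{\mathbb{Z}_+}$ write $\mathcal{F}_{\sigma_n}=f_{\lambda_{n-1}}\circ\cdots\circ f_{\lambda_0}$ (with $\mathcal{F}_{\sigma_0}$ the identity). A sequence $\{x_i\}_{i\ge0}$ in $X$ is an asymptotic average pseudo-orbit of $\mathcal{F}$ if there is $\sigma=\{\lambda_0,\lambda_1,\dots\}\in\Lambda^{\mathbb{Z}_+}$ with $\lim_{n\to\infty}\frac1n\sum_{i=0}^{n-1}d(f_{\lambda_i}(x_i),x_{i+1})=0$. It is asymptotically shadowed in average by $z\in X$ if there is $\sigma\in\Lambda^{\mathbb{Z}_+}$ with $\lim_{n\to\infty}\frac1n\sum_{i=0}^{n-1}d(\mathcal{F}_{\sigma_i}(z),x_i)=0$. $\mathcal{F}$ has the asymptotic average shadowing property if every asymptotic average pseudo-orbit of $\mathcal{F}$ is asymptotically shadowed in average by some point of $X$. $\mathcal{F}$ is uniformly contracting if $\beta=\sup_{\lambda\in\Lambda}\sup_{x\neq y}\frac{d(f_\lambda(x),f_\lambda(y))}{d(x,y)}$ satisfies $\beta<1$. *)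

From HB Require Import structures.
From mathcomp Require Import all_boot all_order all_algebra.
From mathcomp Require Import all_classical all_reals all_analysis.

Set Implicit Arguments.
Unset Strict Implicit.
Unset Printing Implicit Defensive.

Import Order.TTheory GRing.Theory Num.Theory.
Import numFieldNormedType.Exports.
Local Open Scope classical_set_scope.
Local Open Scope ring_scope.

Fixpoint Fsig (L X : Type) (f : L -> X -> X) (sigma : nat -> L) (n : nat)
    : X -> X :=
  match n with
  | 0%N => id
  | n'.+1 => f (sigma n') \o Fsig f sigma n'
  end.

Definition cesaro (R : realType) (u : nat -> R) : nat -> R :=
  fun n => (n%:R)^-1 * \sum_(i < n) u i.

Definition asymptotic_average_pseudo_orbit (R : realType) (X : metricType R)
    (L : Type) (f : L -> X -> X) (x : nat -> X) : Prop :=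
  exists sigma : nat -> L,
    cesaro (fun i => mdist (f (sigma i) (x i)) (x i.+1)) @ \oo --> 0.

Definition asymptotically_shadowed_in_average (R : realType) (X : metricType R)
    (L : Type) (f : L -> X -> X) (x : nat -> X) (z : X) : Prop :=
  exists sigma : nat -> L,
    cesaro (fun i => mdist (Fsig f sigma i z) (x i)) @ \oo --> 0.

Definition asymptotic_average_shadowing_property (R : realType)
    (X : metricType R) (L : Type) (f : L -> X -> X) : Prop :=
  forall x : nat -> X, asymptotic_average_pseudo_orbit f x ->
    exists z : X, asymptotically_shadowed_in_average f x z.

(* beta = sup_l sup_{x <> y} d(f_l x, f_l y) / d(x, y), taken in the extended
   reals (so an unbounded set gives +oo, an empty one -oo). *)
Definition contraction_constant (R : realType) (X : metricType R)
    (L : Type) (f : L -> X -> X) : \bar R :=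
  ereal_sup [set r : \bar R | exists (l : L) (x y : X),
    x != y /\ r = ((mdist (f l x) (f l y) / mdist x y)%:E)%E].

Definition uniformly_contracting (R : realType) (X : metricType R)
    (L : Type) (f : L -> X -> X) : Prop :=
  (contraction_constant f < 1%:E)%E.

(* If every f_l is b-Lipschitz with b < 1, the orbit of z := x 0 under the same
   symbols sigma as the pseudo-orbit satisfies
   d(F_{n+1} z, x (n+1)) <= b d(F_n z, x n) + d(f_{sigma n} (x n), x (n+1)),
   with d(F_0 z, x 0) = 0.  Summing this recursion bounds (1 - b) times the
   partial sums of the deviations by the partial sums of the pseudo-orbit
   errors, so Cesaro convergence to 0 passes from the latter to the former. *)

From Pilot Require Import Defs.
From HB Require Import structures.
From mathcomp Require Import all_boot all_order all_algebra.
From mathcomp Require Import all_classical all_reals all_analysis.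
From mathcomp Require Import lra.

Import Order.TTheory GRing.Theory Num.Theory.
Import numFieldNormedType.Exports.
Local Open Scope classical_set_scope.
Local Open Scope ring_scope.

Lemma uniformly_contracting_lipschitz (R : realType) (X : metricType R)
    (L : Type) (f : L -> X -> X) :
  uniformly_contracting f -> exists2 b : R, 0 <= b < 1 &
    forall l x y, mdist (f l x) (f l y) <= b * mdist x y.
Proof.
rewrite /uniformly_contracting; set c := contraction_constant f => c_lt1.
have c_ub l x y : x != y -> ((mdist (f l x) (f l y) / mdist x y)%:E <= c)%E.
  by move=> xy; apply: ereal_sup_ubound; exists l, x, y.
move: c_ub c_lt1; case: c => [r| |] // c_ub c_lt1.
- exists (Num.max r 0).
    by rewrite le_max lexx orbT /= gt_max ltr01 andbT -lte_fin.
  move=> l x y; have [->|xy] := eqVneq x y; first by rewrite !mdistxx mulr0.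
  have := c_ub l x y xy; rewrite lee_fin ler_pdivrMr ?mdist_gt0 // => le_r.
  by apply: (le_trans le_r); rewrite ler_wpM2r ?mdist_ge0 ?le_max ?lexx.
- exists 0; first by rewrite lexx ltr01.
  move=> l x y; have [->|xy] := eqVneq x y; first by rewrite !mdistxx mulr0.
  by have := c_ub l x y xy; rewrite leeNy_eq.
Qed.

Section ContractiveRecursion.
Variables (R : realType) (a e : nat -> R) (b : R).
Hypotheses (b_ge0 : 0 <= b) (a_ge0 : forall n, 0 <= a n)
  (e_ge0 : forall n, 0 <= e n) (e0 : e 0%N = 0)
  (e_rec : forall n, e n.+1 <= b * e n + a n).

Lemma sum_contractive_recursion_le N :
  (1 - b) * \sum_(i < N) e i <= \sum_(i < N) a i.
Proof.
case: N => [|N]; first by rewrite !big_ord0 mulr0.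
have shift : \sum_(i < N.+1) e i <= b * \sum_(i < N) e i + \sum_(i < N) a i.
  rewrite big_ord_recl e0 add0r mulr_sumr -big_split /=.
  by apply: ler_sum => i _; apply: e_rec.
have e_mono : \sum_(i < N) e i <= \sum_(i < N.+1) e i.
  by rewrite big_ord_recr /= lerDl.
have a_mono : \sum_(i < N) a i <= \sum_(i < N.+1) a i.
  by rewrite big_ord_recr /= lerDl.
have be_mono := ler_wpM2l b_ge0 e_mono.
rewrite mulrBl mul1r; lra.
Qed.

Lemma cesaro_contractive_recursion_cvg0 : b < 1 ->
  Defs.cesaro a @ \oo --> 0 -> Defs.cesaro e @ \oo --> 0.
Proof.
move=> b_lt1 a_cvg0; have b'_gt0 : 0 < 1 - b by rewrite subr_gt0.
apply: (@squeeze_cvgr nat \oo _ R (fun=> 0)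
  (fun n => (1 - b)^-1 * Defs.cesaro a n)).
- near=> n; rewrite /Defs.cesaro mulr_ge0 ?invr_ge0 ?ler0n ?sumr_ge0 //=.
  rewrite mulrCA ler_wpM2l ?invr_ge0 ?ler0n //.
  by rewrite ler_pdivlMl // sum_contractive_recursion_le.
- exact: cvg_cst.
- by rewrite -(mulr0 (1 - b)^-1); apply: cvgMl_tmp.
Unshelve. all: end_near.
Qed.

End ContractiveRecursion.

Lemma Fsig_dist_pseudo_orbit_le (R : realType) (X : metricType R) (L : Type)
    (f : L -> X -> X) (b : R) (sigma : nat -> L) (x : nat -> X) (z : X) n :
  (forall l y y', mdist (f l y) (f l y') <= b * mdist y y') ->
  mdist (Fsig f sigma n.+1 z) (x n.+1) <=
    b * mdist (Fsig f sigma n z) (x n) + mdist (f (sigma n) (x n)) (x n.+1).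
Proof.
move=> f_lip; apply: le_trans (metric_triangle _ (f (sigma n) (x n)) _) _.
exact: lerD (f_lip _ _ _) (lexx _).
Qed.

Theorem mainTheorem1 (R : realType) (X : metricType R) (L : finType)
    (f : L -> X -> X) :
  (0 < #|L|)%N ->
  compact [set: X] ->
  (forall l : L, continuous (f l)) ->
  uniformly_contracting f ->
  asymptotic_average_shadowing_property f.
Proof.
move=> _ _ _ /uniformly_contracting_lipschitz [b /andP[b_ge0 b_lt1] f_lip].
move=> x [sigma pseudo]; exists (x 0%N), sigma.
pose deviation n := mdist (Fsig f sigma n (x 0%N)) (x n).
pose error n := mdist (f (sigma n) (x n)) (x n.+1).
apply: (@cesaro_contractive_recursion_cvg0 R error deviation b b_ge0
  _ _ _ _ b_lt1 pseudo).
- by move=> n; apply: mdist_ge0.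
- by move=> n; apply: mdist_ge0.
- exact: mdistxx.
- by move=> n; apply: Fsig_dist_pseudo_orbit_le.
Qed.
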